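(* Let $v_1\ge v_2>0$, $m\in\mathbb{Z}_{\ge1}$ and $0<b<m$. If a strategy profile $(X,Y)$ with $\mathbf{E}(X)=m$ and $\mathbf{E}(Y)=b$ is a Nash equilibrium of the discrete all-pay auction with valuations $v_1,v_2$, then $Y=\left(1-\frac bm\right)\delta_0+\frac bm Z$, where: (a) if $m=1$: $Z=\lambda_{\mathrm{O}}U_{\mathrm{O}}^1+\lambda_{\mathrm{E}}U_{\mathrm{E}}^1$ with $\lambda_{\mathrm{O}},\lambda_{\mathrm{E}}\ge0$, $\lambda_{\mathrm{O}}+\lambda_{\mathrm{E}}=1$, $\frac{\lambda_{\mathrm{E}}}{2}\ge1-\frac{2}{bv_1}$ and $\frac{\lambda_{\mathrm{E}}}{2}\le\frac1b-\frac{2}{bv_1}$; (b) if $m\ge2$: $Z=\lambda_{\mathrm{O}}U_{\mathrm{O}}^m+\lambda_{\mathrm{E}}U_{\mathrm{E}}^m+\lambda_{\mathrm{O}\uparrow1}U_{\mathrm{O}\uparrow1}^m+\sum_{j=1}^{m-1}\lambda_jW_j^m$ with $\lambda_{\mathrm{O}},\lambda_{\mathrm{E}},\lambda_{\mathrm{O}\uparrow1},\lambda_1,\dots,\lambda_{m-1}\ge0$, $\lambda_{\mathrm{O}}+\lambda_{\mathrm{E}}+\lambda_{\mathrm{O}\uparrow1}+\sum_{j=1}^{m-1}\lambda_j=1$, $\frac{\lambda_{\mathrm{E}}}{m+1}+\frac{1}{2m}\sum_{j=1}^{m-1}\lambda_j\le\frac mb\left(1-\frac{v_2}{v_1}\right)$,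 $\frac{\lambda_{\mathrm{O}}}{m}+\frac{\lambda_{\mathrm{E}}}{m+1}+\frac{\lambda_{\mathrm{O}\uparrow1}}{m-1}+\frac{1}{m}\sum_{j=1}^{m-1}\lambda_j=\frac{2m}{bv_1}$, and, in the case $b>m-1$, $\frac{1}{2m}\sum_{j=1}^{m-1}\lambda_j+\frac{\lambda_{\mathrm{O}\uparrow1}}{m-1}\le\frac{m-b}{b}$.
   Context: Discrete all-pay auction: two players, 1 and 2, value a prize at $v_1$ and $v_2$ respectively, where $v_1\ge v_2>0$. A (mixed) strategy is a probability distribution on $\mathbb{Z}_{\ge 0}$ with finite mean, identified with a $\mathbb{Z}_{\ge0}$-valued random variable; the two players' choices are independent. If player 1 uses $X$ and player 2 uses $Y$, the expected payoffs are $P^1(X,Y)=v_1\Pr(X>Y)+\frac{v_1}{2}\Pr(X=Y)-\mathbf{E}(X)$ and $P^2(Y,X)=v_2\Pr(Y>X)+\frac{v_2}{2}\Pr(X=Y)-\mathbf{E}(Y)$. A Nash equilibrium of the all-pay auction is a pair $(X,Y)$ with $P^1(X,Y)\ge P^1(X',Y)$ and $P^2(Y,X)\ge P^2(Y',X)$ for all strategies $X',Y'$. $\delta_j$ denotes the point mass at $j$; $\lambda A+(1-\lambda)B$ denotes the mixture of distributions $A$ and $B$ (similarly for longer convex combinations). Special distributions: for $m\ge1$, $U_{\mathrm{O}}^m$ is the uniform distribution on $\{1,3,\dots,2m-1\}$; for $m\ge0$, $U_{\mathrm{E}}^m$ is the uniform distribution on $\{0,2,\dots,2m\}$; for $m\ge2$,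 $U_{\mathrm{O}\uparrow1}^m$ is the uniform distribution on $\{2,4,\dots,2m-2\}$; for $m\ge2$ and $1\le j\le m-1$, $W_j^m=\frac{1}{2m}\delta_0+\sum_{i=1}^{j-1}\frac1m\delta_{2i}+\frac{1}{2m}\delta_{2j}+\sum_{i=j+1}^{m}\frac1m\delta_{2i-1}$. *)

From Stdlib Require Import Reals Lra Lia Arith Bool.
From Coquelicot Require Import Coquelicot.
Open Scope R_scope.
Open Scope bool_scope.

Fixpoint sumR (n : nat) (f : nat -> R) : R :=
  match n with
  | O => 0
  | S k => sumR k f + f k
  end.

(* A mixed strategy: a probability distribution on Z_{>=0} with finite mean,
   given by its probability mass function p : nat -> R. *)
Definition strategy (p : nat -> R) : Prop :=
  (forall n, 0 <= p n) /\ is_series p 1 /\ ex_series (fun n => INR n * p n).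

Definition mean (p : nat -> R) : R := Series (fun n => INR n * p n).

(* Pr(X > Y) = sum_i Pr(X = i) Pr(Y < i) *)
Definition prob_gt (p q : nat -> R) : R := Series (fun i => p i * sumR i q).
Definition prob_eq (p q : nat -> R) : R := Series (fun i => p i * q i).

Definition payoff (v : R) (p q : nat -> R) : R :=
  v * prob_gt p q + v / 2 * prob_eq p q - mean p.

Definition nash (v1 v2 : R) (p q : nat -> R) : Prop :=
  strategy p /\ strategy q /\
  (forall p', strategy p' -> payoff v1 p q >= payoff v1 p' q) /\
  (forall q', strategy q' -> payoff v2 q p >= payoff v2 q' p).

Definition delta (j : nat) (k : nat) : R := if Nat.eqb k j then 1 else 0.

Definition U_O (m : nat) (k : nat) : R :=
  if Nat.odd k && Nat.leb k (2 * m - 1) then / INR m else 0.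
Definition U_E (m : nat) (k : nat) : R :=
  if Nat.even k && Nat.leb k (2 * m) then / INR (m + 1) else 0.
Definition U_Oup1 (m : nat) (k : nat) : R :=
  if Nat.even k && Nat.leb 2 k && Nat.leb k (2 * m - 2) then / INR (m - 1) else 0.
(* W_j^m = 1/(2m) d_0 + sum_{i=1}^{j-1} 1/m d_{2i} + 1/(2m) d_{2j}
          + sum_{i=j+1}^m 1/m d_{2i-1} *)
Definition W (m j : nat) (k : nat) : R :=
  if Nat.eqb k 0 then / (2 * INR m)
  else if Nat.even k && Nat.leb 2 k && Nat.leb k (2 * j - 2) then / INR m
  else if Nat.eqb k (2 * j) then / (2 * INR m)
  else if Nat.odd k && Nat.leb (2 * j + 1) k && Nat.leb k (2 * m - 1) then / INR m
  else 0.

(* No pure bid earns more than the equilibrium payoff, and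
      an equilibrium strategy only uses bids earning exactly it (its payoff is
      the p-average of the pure payoffs).  As Apay v q k < 0 once k > v,
      equilibrium strategies have finite support, so all series are finite
      sums, and a payoff is v times a winning share (ties counting half) minus
      the mean bid; the two players' winning shares add up to 1.
   2. Averaging over the odd bids 1, 3, ..., 2m-1.  Their pure payoffs against
      f add up to v (m - mean f / 2 + tail) - m^2, where the tail is a
      nonnegative weight of the mass of f above 2m.  For player 2 this shows
      that his winning share is at least b/(2m); for player 1 it then forces
      q to live on {0, ..., 2m}, player 1's payoff to be
      U = v1 (1 - b/(2m)) - m, every odd bid below 2m to earn exactly U, and
      v2 <= 2m.
   3. Decomposition.  Comparing the pure payoffs of neighbouring bids turns
      these facts into linear relations on q 0, ..., q (2m); explicit weights
      built from q then write q = (1 - b/m) delta_0 + (b/m) Z with Z the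
      announced mixture, the constraints on the weights being those relations. *)

From Stdlib Require Import Reals Lra Lia.
From Coquelicot Require Import Coquelicot.
Open Scope R_scope.

Lemma sumR_ext (f g : nat -> R) n :
  (forall i, (i < n)%nat -> f i = g i) -> sumR n f = sumR n g.
Proof.
  induction n as [|n IH]; intros H; simpl; auto.
  rewrite IH by (intros; apply H; lia). rewrite H by lia. ring.
Qed.

Lemma sumR_plus (f g : nat -> R) n : sumR n (fun i => f i + g i) = sumR n f + sumR n g.
Proof. induction n; simpl; [ring | rewrite IHn; ring]. Qed.

Lemma sumR_minus (f g : nat -> R) n : sumR n (fun i => f i - g i) = sumR n f - sumR n g.
Proof. induction n; simpl; [ring | rewrite IHn; ring]. Qed.

Lemma sumR_scal (c : R) (f : nat -> R) n : sumR n (fun i => c * f i) = c * sumR n f.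
Proof. induction n; simpl; [ring | rewrite IHn; ring]. Qed.

Lemma sumR_const (c : R) n : sumR n (fun _ => c) = INR n * c.
Proof. induction n; simpl sumR; [simpl; ring | rewrite IHn, S_INR; ring]. Qed.

Lemma sumR_split (f : nat -> R) a d :
  sumR (a + d) f = sumR a f + sumR d (fun i => f (a + i)%nat).
Proof.
  induction d as [|d IH]; simpl.
  - rewrite Nat.add_0_r. ring.
  - rewrite Nat.add_succ_r. cbn [sumR]. rewrite IH. ring.
Qed.

Lemma sumR_zero (f : nat -> R) n : (forall i, (i < n)%nat -> f i = 0) -> sumR n f = 0.
Proof.
  intros H. rewrite (sumR_ext f (fun _ => 0)) by auto.
  rewrite sumR_const. ring.
Qed.

Lemma sumR_nonneg (f : nat -> R) n : (forall i, (i < n)%nat -> 0 <= f i) -> 0 <= sumR n f.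
Proof.
  induction n as [|n IH]; intros H; simpl; [lra|].
  assert (0 <= f n) by (apply H; lia).
  assert (0 <= sumR n f) by (apply IH; intros; apply H; lia). lra.
Qed.

Lemma sumR_le_const (g : nat -> R) c n :
  (forall i, (i < n)%nat -> g i <= c) -> sumR n g <= INR n * c.
Proof.
  intros H. rewrite <- sumR_const, <- (Rplus_0_r (sumR n g)), <- (Rminus_diag (sumR n (fun _ => c))).
  assert (0 <= sumR n (fun i => c - g i)) by (apply sumR_nonneg; intros i Hi; specialize (H i Hi); lra).
  rewrite sumR_minus in *. lra.
Qed.

Lemma sumR_term (f : nat -> R) n j :
  (forall i, (i < n)%nat -> 0 <= f i) -> (j < n)%nat -> f j <= sumR n f.
Proof.
  intros H Hj. replace n with (S j + (n - S j))%nat by lia. rewrite sumR_split. simpl.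
  assert (0 <= sumR j f) by (apply sumR_nonneg; intros; apply H; lia).
  assert (0 <= sumR (n - S j) (fun i => f (S (j + i)))) by (apply sumR_nonneg; intros; apply H; lia).
  lra.
Qed.

Lemma sumR_nonneg_zero (f : nat -> R) n :
  (forall i, (i < n)%nat -> 0 <= f i) -> sumR n f = 0 -> forall i, (i < n)%nat -> f i = 0.
Proof. intros H Hs i Hi. apply Rle_antisym; [rewrite <- Hs; apply sumR_term|]; auto. Qed.

Lemma sumR_telescope (g : nat -> R) n : sumR n (fun i => g (S i) - g i) = g n - g O.
Proof. induction n as [|n IH]; simpl sumR; [ring | rewrite IH; ring]. Qed.

(* Sums against the step weights taken by W on odd and on even bids. *)
Lemma sumR_cut (g : nat -> R) a t N : (t <= N)%nat ->
  sumR N (fun i => g i * (if Nat.ltb i t then a else 0)) = a * sumR t g.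
Proof.
  intros H. replace N with (t + (N - t))%nat by lia. rewrite sumR_split.
  rewrite (sumR_zero _ (N - t)).
  - rewrite <- sumR_scal, Rplus_0_r. apply sumR_ext. intros i Hi.
    destruct (Nat.ltb_spec i t); [ring | lia].
  - intros i _. destruct (Nat.ltb_spec (t + i) t); [lia | ring].
Qed.

Lemma sumR_mid (g : nat -> R) s N a c : (s < N)%nat ->
  sumR N (fun i => g i * (if Nat.ltb i s then 0 else if Nat.eqb i s then c else a)) =
  c * g s + a * (sumR N g - sumR (S s) g).
Proof.
  intros H. replace N with (S s + (N - S s))%nat by lia. rewrite !sumR_split. cbn [sumR].
  rewrite (sumR_zero _ s) by (intros i Hi; destruct (Nat.ltb_spec i s); [ring | lia]).
  destruct (Nat.ltb_spec s s); [lia|]. rewrite Nat.eqb_refl.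
  rewrite (sumR_ext _ (fun i => a * g (S s + i)%nat)).
  - rewrite sumR_scal. ring.
  - intros i _. destruct (Nat.ltb_spec (S s + i) s); [lia|].
    destruct (Nat.eqb_spec (S s + i) s); [lia | ring].
Qed.

Lemma sum_n_sumR (a : nat -> R) n : sum_n a n = sumR (S n) a.
Proof.
  induction n as [|n IH].
  - rewrite sum_O. simpl. ring.
  - rewrite sum_Sn, IH. simpl. unfold plus. simpl. ring.
Qed.

Lemma is_series_fin (f : nat -> R) N :
  (forall k, (N <= k)%nat -> f k = 0) -> is_series f (sumR N f).
Proof.
  intros H. unfold is_series.
  apply filterlim_ext_loc with (fun _ => sumR N f).
  - exists N. intros n Hn. rewrite sum_n_sumR.
    replace (S n) with (N + (S n - N))%nat by lia. rewrite sumR_split.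
    rewrite (sumR_zero _ (S n - N)) by (intros; apply H; lia). ring.
  - apply filterlim_const.
Qed.

Lemma Series_fin (f : nat -> R) N :
  (forall k, (N <= k)%nat -> f k = 0) -> Series f = sumR N f.
Proof. intros H. apply is_series_unique, is_series_fin, H. Qed.

Lemma Series_point (f : nat -> R) k : (forall i, i <> k -> f i = 0) -> Series f = f k.
Proof.
  intros H. rewrite (Series_fin f (S k)) by (intros; apply H; lia).
  simpl. rewrite sumR_zero by (intros; apply H; lia). ring.
Qed.

Lemma is_series_partial (a : nat -> R) l :
  (forall n, 0 <= a n) -> is_series a l -> forall n, sumR n a <= l.
Proof.
  intros Hpos Hs n.
  assert (Rbar_le (sumR n a) l) as Hle; [|exact Hle].
  apply is_lim_seq_le_loc with (fun _ => sumR n a) (sum_n a); [|apply is_lim_seq_const | exact Hs].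
  exists n. intros k Hk. rewrite sum_n_sumR.
  replace (S k) with (n + (S k - n))%nat by lia. rewrite sumR_split.
  assert (0 <= sumR (S k - n) (fun i => a (n + i)%nat)) by (apply sumR_nonneg; auto). lra.
Qed.

Lemma is_series_term (a : nat -> R) l :
  (forall n, 0 <= a n) -> is_series a l -> forall n, a n <= l.
Proof.
  intros Hpos Hs n. eapply Rle_trans; [|apply (is_series_partial a l Hpos Hs (S n))].
  apply sumR_term; auto.
Qed.

Lemma ex_series_dominated (a b : nat -> R) :
  (forall n, 0 <= a n <= b n) -> ex_series b -> ex_series a.
Proof.
  intros H. apply (@ex_series_le R_AbsRing R_CompleteNormedModule).
  intros n. change (norm (a n)) with (Rabs (a n)). rewrite Rabs_pos_eq; apply H.
Qed.

(** * Pure bids and best responses *)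

Definition Apay (v : R) (q : nat -> R) (k : nat) : R := v * (sumR k q + q k / 2) - INR k.

Lemma Apay_succ v q k : Apay v q (S k) = Apay v q k + v / 2 * (q k + q (S k)) - 1.
Proof. unfold Apay. simpl sumR. rewrite S_INR. field. Qed.

Lemma delta_ne j i : i <> j -> delta j i = 0.
Proof. intros H. unfold delta. destruct (Nat.eqb_spec i j); [lia | reflexivity]. Qed.

Lemma delta_eq j : delta j j = 1.
Proof. unfold delta. rewrite Nat.eqb_refl. reflexivity. Qed.

Lemma strategy_delta k : strategy (delta k).
Proof.
  split; [|split].
  - intros n. unfold delta. destruct (Nat.eqb n k); lra.
  - replace 1 with (sumR (S k) (delta k)).
    + apply is_series_fin. intros; apply delta_ne; lia.
    + simpl. rewrite delta_eq, sumR_zero by (intros; apply delta_ne; lia). ring.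
  - exists (sumR (S k) (fun n => INR n * delta k n)). apply is_series_fin.
    intros; rewrite delta_ne by lia; ring.
Qed.

Lemma payoff_delta v q k : payoff v (delta k) q = Apay v q k.
Proof.
  unfold payoff, prob_gt, prob_eq, mean, Apay.
  rewrite (Series_point _ k) by (intros; rewrite delta_ne by lia; ring).
  rewrite (Series_point (fun i => delta k i * q i) k) by (intros; rewrite delta_ne by lia; ring).
  rewrite (Series_point (fun n => INR n * delta k n) k) by (intros; rewrite delta_ne by lia; ring).
  rewrite delta_eq. field.
Qed.

Lemma payoff_average v p q :
  strategy p -> strategy q -> is_series (fun k => p k * Apay v q k) (payoff v p q).
Proof.
  intros [Hp0 [Hp1 Hp2]] [Hq0 [Hq1 _]].
  assert (Hp : ex_series p) by (exists 1; exact Hp1).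
  assert (Ggt : ex_series (fun i => p i * sumR i q)).
  { apply ex_series_dominated with p; auto. intros n.
    pose proof (is_series_partial q 1 Hq0 Hq1 n). pose proof (sumR_nonneg q n (fun i _ => Hq0 i)).
    specialize (Hp0 n). split; nra. }
  assert (Geq : ex_series (fun i => p i * q i)).
  { apply ex_series_dominated with p; auto. intros n.
    pose proof (is_series_term q 1 Hq0 Hq1 n). specialize (Hp0 n). specialize (Hq0 n). split; nra. }
  apply is_series_ext with
    (fun k => plus (plus (scal v (p k * sumR k q)) (scal (v / 2) (p k * q k))) (opp (INR k * p k))).
  { intros k. unfold Apay, plus, scal, opp; simpl. unfold mult; simpl. field. }
  unfold payoff, prob_gt, prob_eq, mean.
  apply (is_series_minus _ _ _ _ (is_series_plus _ _ _ _
          (is_series_scal_l v _ _ (Series_correct _ Ggt))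
          (is_series_scal_l (v / 2) _ _ (Series_correct _ Geq)))
          (Series_correct _ Hp2)).
Qed.

Section BestResponse.

Variables (v : R) (p q : nat -> R).
Hypotheses (Hv : v > 0) (Hp : strategy p) (Hq : strategy q).
Hypothesis Hbest : forall p', strategy p' -> payoff v p q >= payoff v p' q.

Lemma pure_payoff_le : forall k, Apay v q k <= payoff v p q.
Proof. intros k. rewrite <- payoff_delta. apply Rge_le, Hbest, strategy_delta. Qed.

Lemma best_response_indifference : forall k, p k * (payoff v p q - Apay v q k) = 0.
Proof.
  destruct Hp as [Hp0 [Hp1 _]].
  assert (Hnn : forall k, 0 <= p k * (payoff v p q - Apay v q k)).
  { intros k. apply Rmult_le_pos; [apply Hp0|]. pose proof (pure_payoff_le k). lra. }
  assert (Hs : is_series (fun k => p k * (payoff v p q - Apay v q k)) 0).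
  { apply is_series_ext with (fun k => plus (scal (payoff v p q) (p k)) (opp (p k * Apay v q k))).
    { intros k. unfold plus, scal, opp; simpl. unfold mult; simpl. ring. }
    replace 0 with (plus (scal (payoff v p q) 1) (opp (payoff v p q)))
      by (unfold plus, scal, opp; simpl; unfold mult; simpl; ring).
    exact (is_series_minus _ _ _ _ (is_series_scal_l _ _ _ Hp1) (payoff_average v p q Hp Hq)). }
  intros k. apply Rle_antisym; [exact (is_series_term _ _ Hnn Hs k) | apply Hnn].
Qed.

(* Bids above the valuation lose money while bidding 0 does not. *)
Lemma best_response_finite_support : exists N, forall k, (N <= k)%nat -> p k = 0.
Proof.
  destruct Hq as [Hq0 [Hq1 _]].
  destruct (INR_unbounded v) as [N HN]. exists N. intros k Hk.
  assert (HkN : INR N <= INR k) by (apply le_INR; auto).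
  assert (H0 : 0 <= payoff v p q).
  { pose proof (pure_payoff_le 0%nat) as A0. unfold Apay in A0. simpl in A0.
    specialize (Hq0 0%nat). nra. }
  assert (HAk : Apay v q k < 0).
  { unfold Apay. pose proof (is_series_partial q 1 Hq0 Hq1 (S k)) as Hs. simpl in Hs.
    specialize (Hq0 k). nra. }
  pose proof (best_response_indifference k) as Hz. destruct Hp as [Hp0 _].
  specialize (Hp0 k). destruct (Rle_lt_or_eq_dec 0 (p k) Hp0) as [Hlt | Heq]; [|auto].
  assert (0 < p k * (payoff v p q - Apay v q k)) by (apply Rmult_lt_0_compat; lra). lra.
Qed.

End BestResponse.

(* Probability of winning, ties counting half, with the bid distribution f
   against g, for f supported below N. *)
Definition share (f g : nat -> R) (N : nat) : R :=
  sumR N (fun i => f i * sumR i g) + / 2 * sumR N (fun i => f i * g i).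

Lemma mean_fin (f : nat -> R) N :
  (forall k, (N <= k)%nat -> f k = 0) -> mean f = sumR N (fun k => INR k * f k).
Proof. intros H. apply Series_fin. intros k Hk. rewrite H by auto. ring. Qed.

Lemma payoff_share v p q N :
  (forall k, (N <= k)%nat -> p k = 0) -> payoff v p q = v * share p q N - mean p.
Proof.
  intros H. unfold payoff, prob_gt, prob_eq, share.
  rewrite (Series_fin _ N), (Series_fin (fun i => p i * q i) N); [field | |];
  intros k Hk; rewrite H by auto; ring.
Qed.

Lemma share_complement f g N :
  sumR N f = 1 -> sumR N g = 1 -> share f g N + share g f N = 1.
Proof.
  intros Hf Hg. unfold share.
  assert (H : forall n, sumR n (fun i => f i * sumR i g) + sumR n (fun i => g i * sumR i f)
                       + sumR n (fun i => f i * g i) = sumR n f * sumR n g)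
    by (induction n as [|n IH]; simpl; nra).
  rewrite (sumR_ext (fun i => g i * f i) (fun i => f i * g i)) by (intros; ring).
  specialize (H N). rewrite Hf, Hg in H. lra.
Qed.

(** * Averaging over the odd bids *)

Definition tail (f : nat -> R) (m N : nat) : R :=
  sumR (N - 2 * m) (fun j => f (2 * m + j)%nat * (INR j / 2)).

Lemma tail_nonneg f m N : (forall k, 0 <= f k) -> 0 <= tail f m N.
Proof.
  intros H. apply sumR_nonneg. intros j _.
  apply Rmult_le_pos; [apply H|]. pose proof (pos_INR j). lra.
Qed.

Lemma tail_zero_support f m N : (forall k, 0 <= f k) -> tail f m N = 0 ->
  forall k, (2 * m < k < N)%nat -> f k = 0.
Proof.
  intros H Ht k Hk.
  assert (Hz : f (2 * m + (k - 2 * m))%nat * (INR (k - 2 * m) / 2) = 0).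
  { apply (sumR_nonneg_zero (fun j => f (2 * m + j)%nat * (INR j / 2)) (N - 2 * m));
      [|exact Ht | lia].
    intros j _. apply Rmult_le_pos; [apply H|]. pose proof (pos_INR j). lra. }
  replace (2 * m + (k - 2 * m))%nat with k in Hz by lia.
  assert (INR (k - 2 * m) > 0) by (apply lt_0_INR; lia). nra.
Qed.

Lemma odd_bids_total v f m N mu : (2 * m <= N)%nat ->
  sumR N f = 1 -> sumR N (fun k => INR k * f k) = mu ->
  sumR m (fun i => Apay v f (2 * i + 1)) = v * (INR m - mu / 2 + tail f m N) - INR m * INR m.
Proof.
  intros HN Hs Hmu.
  (* Bid 2i+1 wins f k fully for k <= 2i and half for k = 2i+1, so bid k < 2m
     is counted m - k/2 times in total. *)
  assert (Hcount : forall n, sumR n (fun i => sumR (2 * i + 1) f + f (2 * i + 1)%nat / 2)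
                       = sumR (2 * n) (fun k => f k * (INR n - INR k / 2))).
  { induction n as [|n IH]; [simpl; ring|].
    replace (2 * S n)%nat with (S (S (2 * n))) by lia. cbn [sumR]. rewrite IH.
    rewrite (sumR_ext (fun k => f k * (INR (S n) - INR k / 2))
               (fun k => f k * (INR n - INR k / 2) + f k)) by (intros; rewrite S_INR; ring).
    rewrite sumR_plus. replace (2 * n + 1)%nat with (S (2 * n)) by lia. cbn [sumR].
    rewrite !S_INR, !mult_INR. simpl. field. }
  assert (Hodd : forall n, sumR n (fun i => INR (2 * i + 1)) = INR n * INR n).
  { induction n as [|n IH]; [simpl; ring|]. cbn [sumR]. rewrite IH, S_INR, plus_INR, mult_INR.
    simpl. ring. }
  assert (Hsplit : sumR (2 * m) (fun k => f k * (INR m - INR k / 2))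
                   = INR m * sumR N f - sumR N (fun k => INR k * f k) / 2 + tail f m N).
  { assert (Hlin : sumR N (fun k => f k * (INR m - INR k / 2))
                   = INR m * sumR N f - sumR N (fun k => INR k * f k) / 2).
    { unfold Rdiv. rewrite <- sumR_scal, Rmult_comm, <- sumR_scal, <- sumR_minus.
      apply sumR_ext. intros; ring. }
    assert (Hcut : sumR N (fun k => f k * (INR m - INR k / 2))
                   = sumR (2 * m) (fun k => f k * (INR m - INR k / 2)) - tail f m N).
    { unfold tail. replace N with (2 * m + (N - 2 * m))%nat at 1 by lia. rewrite sumR_split.
      rewrite (sumR_ext _ (fun j => -1 * (f (2 * m + j)%nat * (INR j / 2))) (N - 2 * m)).
      - rewrite sumR_scal. ring.
      - intros i _. rewrite plus_INR, mult_INR. simpl. field. }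
    lra. }
  unfold Apay. rewrite sumR_minus, sumR_scal, Hcount, Hodd, Hsplit, Hs, Hmu. ring.
Qed.

(** * Consequences of the equilibrium conditions *)

Section Equilibrium.

Variables (v1 v2 b : R) (m N : nat) (p q : nat -> R).
Hypotheses (Hv : v1 >= v2) (Hv2 : v2 > 0) (Hb : 0 < b) (Hbm : b < INR m).
Hypotheses (Hp0 : forall k, 0 <= p k) (Hq0 : forall k, 0 <= q k).
Hypothesis HN : (2 * m <= N)%nat.
Hypotheses (Hp_sum : sumR N p = 1) (Hq_sum : sumR N q = 1).
Hypotheses (Hp_mean : sumR N (fun k => INR k * p k) = INR m)
           (Hq_mean : sumR N (fun k => INR k * q k) = b).
Hypotheses (Hbest1 : forall k, Apay v1 q k <= v1 * share p q N - INR m)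
           (Hbest2 : forall k, Apay v2 p k <= v2 * share q p N - b).

Let U := v1 * (1 - b / (2 * INR m)) - INR m.

Lemma m_pos : 0 < INR m.
Proof. pose proof (pos_INR m). lra. Qed.

(* Bidding the odd numbers below 2m uniformly guarantees player 2 a winning
   share of at least 1/2 against p, and bidding 0 guarantees him a nonnegative
   payoff; together they give player 2 a winning share of at least b/(2m). *)
Lemma player2_share_lower : b / 2 <= INR m * share q p N.
Proof.
  pose proof m_pos as Hm.
  assert (Havg : v2 * (INR m / 2) - INR m * INR m <= INR m * (v2 * share q p N - b)).
  { pose proof (odd_bids_total v2 p m N (INR m) HN Hp_sum Hp_mean) as T.
    pose proof (tail_nonneg p m N Hp0).
    assert (sumR m (fun i => Apay v2 p (2 * i + 1)) <= INR m * (v2 * share q p N - b))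
      by (apply sumR_le_const; intros; apply Hbest2).
    nra. }
  assert (H0 : 0 <= v2 * share q p N - b).
  { eapply Rle_trans; [|apply (Hbest2 0%nat)]. unfold Apay. simpl. specialize (Hp0 0%nat). nra. }
  assert (INR m * (v2 * share q p N - b) >= b * (v2 / 2 - INR m)).
  { destruct (Rle_lt_dec 0 (v2 / 2 - INR m)).
    - assert (0 <= (INR m - b) * (v2 / 2 - INR m)) by (apply Rmult_le_pos; lra). nra.
    - nra. }
  apply (Rmult_le_reg_l v2); nra.
Qed.

Lemma player1_payoff_upper : v1 * share p q N - INR m <= U.
Proof.
  pose proof m_pos. pose proof player2_share_lower.
  pose proof (share_complement p q N Hp_sum Hq_sum).
  unfold U. apply Rmult_le_reg_l with (INR m); [lra|].
  replace (INR m * (v1 * (1 - b / (2 * INR m)) - INR m)) with (v1 * (INR m - b / 2) - INR m * INR m)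
    by (field; lra).
  nra.
Qed.

(* Player 1's average over the odd bids is at least v1 (m - b/2 + tail) - m^2,
   which exceeds what his payoff allows unless the tail vanishes and every
   odd bid is optimal. *)
Lemma odd_bids_total_q : sumR m (fun i => Apay v1 q (2 * i + 1)) = INR m * U + v1 * tail q m N.
Proof.
  pose proof m_pos. rewrite (odd_bids_total v1 q m N b HN Hq_sum Hq_mean). unfold U. field. lra.
Qed.

Lemma q_tail_zero : tail q m N = 0.
Proof.
  pose proof m_pos. pose proof odd_bids_total_q. pose proof player1_payoff_upper.
  pose proof (tail_nonneg q m N Hq0).
  assert (sumR m (fun i => Apay v1 q (2 * i + 1)) <= INR m * U)
    by (apply sumR_le_const; intros i _; pose proof (Hbest1 (2 * i + 1)); lra).
  apply Rle_antisym; [apply (Rmult_le_reg_l v1)|]; lra.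
Qed.

Lemma player1_payoff : v1 * share p q N - INR m = U.
Proof.
  pose proof m_pos. pose proof player1_payoff_upper.
  pose proof odd_bids_total_q as T. rewrite q_tail_zero, Rmult_0_r, Rplus_0_r in T.
  assert (sumR m (fun i => Apay v1 q (2 * i + 1)) <= INR m * (v1 * share p q N - INR m))
    by (apply sumR_le_const; intros; apply Hbest1).
  apply Rle_antisym; [lra|]. apply (Rmult_le_reg_l (INR m)); lra.
Qed.

Lemma odd_bids_optimal : forall i, (i < m)%nat -> Apay v1 q (2 * i + 1) = U.
Proof.
  intros i Hi.
  assert (Hz : sumR m (fun i => U - Apay v1 q (2 * i + 1)) = 0).
  { rewrite sumR_minus, sumR_const, odd_bids_total_q, q_tail_zero. ring. }
  assert (Hnn : forall j, (j < m)%nat -> 0 <= U - Apay v1 q (2 * j + 1)).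
  { intros j _. rewrite <- player1_payoff. pose proof (Hbest1 (2 * j + 1)). lra. }
  pose proof (sumR_nonneg_zero _ m Hnn Hz i Hi). lra.
Qed.

(* With the winning shares now known exactly, the lower bound on player 2's
   payoff from the odd bids forces v2 <= 2m. *)
Lemma v2_le_2m : v2 <= 2 * INR m.
Proof.
  pose proof m_pos. pose proof (share_complement p q N Hp_sum Hq_sum).
  pose proof (odd_bids_total v2 p m N (INR m) HN Hp_sum Hp_mean) as T.
  pose proof (tail_nonneg p m N Hp0).
  assert (sumR m (fun i => Apay v2 p (2 * i + 1)) <= INR m * (v2 * share q p N - b))
    by (apply sumR_le_const; intros; apply Hbest2).
  assert (Hs1 : INR m * share p q N = INR m - b / 2).
  { apply (Rmult_eq_reg_l v1); [|lra].
    transitivity (INR m * (v1 * share p q N - INR m) + INR m * INR m); [ring|].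
    rewrite player1_payoff. unfold U. field. lra. }
  assert (INR m * share q p N = b / 2) by nra.
  nra.
Qed.

End Equilibrium.

Lemma equilibrium_structure v1 v2 m b p q :
  v1 >= v2 -> v2 > 0 -> 0 < b -> b < INR m ->
  nash v1 v2 p q -> mean p = INR m -> mean q = b ->
  (forall k, 0 <= q k) /\ (forall k, (2 * m < k)%nat -> q k = 0) /\ sumR (2 * m + 1) q = 1 /\
  (forall k, Apay v1 q k <= v1 * (1 - b / (2 * INR m)) - INR m) /\
  (forall i, (i < m)%nat -> Apay v1 q (2 * i + 1) = v1 * (1 - b / (2 * INR m)) - INR m) /\
  v2 <= 2 * INR m.
Proof.
  intros Hv Hv2 Hb Hbm [Hp [Hq [Hbest1 Hbest2]]] Hp_mean Hq_mean.
  destruct (best_response_finite_support v1 p q ltac:(lra) Hp Hq Hbest1) as [N1 HN1].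
  destruct (best_response_finite_support v2 q p Hv2 Hq Hp Hbest2) as [N2 HN2].
  set (N := (N1 + N2 + 2 * m + 1)%nat).
  assert (Hp_supp : forall k, (N <= k)%nat -> p k = 0) by (intros; apply HN1; unfold N in *; lia).
  assert (Hq_supp : forall k, (N <= k)%nat -> q k = 0) by (intros; apply HN2; unfold N in *; lia).
  assert (Hsum : forall f, strategy f -> (forall k, (N <= k)%nat -> f k = 0) -> sumR N f = 1).
  { intros f [_ [Hf _]] Hsupp. rewrite <- (is_series_unique _ _ Hf). symmetry.
    apply Series_fin, Hsupp. }
  assert (HN : (2 * m <= N)%nat) by (unfold N; lia).
  pose proof (Hsum p Hp Hp_supp) as Hp_sum. pose proof (Hsum q Hq Hq_supp) as Hq_sum.
  rewrite (mean_fin p N Hp_supp) in Hp_mean. rewrite (mean_fin q N Hq_supp) in Hq_mean.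
  assert (Hbest1' : forall k, Apay v1 q k <= v1 * share p q N - INR m).
  { intros k. rewrite <- Hp_mean, <- (mean_fin p N Hp_supp), <- payoff_share by auto.
    apply (pure_payoff_le v1 p q Hbest1). }
  assert (Hbest2' : forall k, Apay v2 p k <= v2 * share q p N - b).
  { intros k. rewrite <- Hq_mean, <- (mean_fin q N Hq_supp), <- payoff_share by auto.
    apply (pure_payoff_le v2 q p Hbest2). }
  destruct Hp as [Hp0 _]. destruct Hq as [Hq0 _].
  pose proof (q_tail_zero v1 v2 b m N p q Hv Hv2 Hb Hbm Hp0 Hq0 HN Hp_sum Hq_sum
                Hp_mean Hq_mean Hbest1' Hbest2') as Htail.
  pose proof (player1_payoff v1 v2 b m N p q Hv Hv2 Hb Hbm Hp0 Hq0 HN Hp_sum Hq_sum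
                Hp_mean Hq_mean Hbest1' Hbest2') as Hpay.
  assert (Hq_high : forall k, (2 * m < k)%nat -> q k = 0).
  { intros k Hk. destruct (Nat.lt_ge_cases k N); [|auto].
    apply (tail_zero_support q m N Hq0 Htail). lia. }
  split; [|split; [|split; [|split; [|split]]]]; auto.
  - replace N with (2 * m + 1 + (N - (2 * m + 1)))%nat in Hq_sum by lia.
    rewrite sumR_split, (sumR_zero _ (N - (2 * m + 1))) in Hq_sum by (intros; apply Hq_high; lia).
    lra.
  - intros k. rewrite <- Hpay. apply Hbest1'.
  - exact (odd_bids_optimal v1 v2 b m N p q Hv Hv2 Hb Hbm Hp0 Hq0 HN Hp_sum Hq_sum
             Hp_mean Hq_mean Hbest1' Hbest2').
  - exact (v2_le_2m v1 v2 b m N p q Hv Hv2 Hb Hbm Hp0 Hq0 HN Hp_sum Hq_sum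
             Hp_mean Hq_mean Hbest1' Hbest2').
Qed.

Lemma even_double n : Nat.even (2 * n) = true.
Proof. rewrite <- Nat.negb_odd, Nat.odd_even. reflexivity. Qed.

Lemma even_double_succ n : Nat.even (2 * n + 1) = false.
Proof. rewrite <- Nat.negb_odd, Nat.odd_odd. reflexivity. Qed.

Ltac decide_comparisons :=
  repeat match goal with
  | |- context [Nat.eqb ?a ?b] => destruct (Nat.eqb_spec a b)
  | |- context [Nat.leb ?a ?b] => destruct (Nat.leb_spec a b)
  | |- context [Nat.ltb ?a ?b] => destruct (Nat.ltb_spec a b)
  end; cbn [andb]; try (exfalso; lia).

Ltac parity := rewrite ?even_double, ?even_double_succ, ?Nat.odd_odd, ?Nat.odd_even.

Lemma UO_odd m t : (t < m)%nat -> U_O m (2 * t + 1) = / INR m.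
Proof. intros H. unfold U_O. parity. decide_comparisons. reflexivity. Qed.

Lemma UO_even m t : U_O m (2 * t) = 0.
Proof. unfold U_O. parity. reflexivity. Qed.

Lemma UO_high m k : (1 <= m)%nat -> (2 * m <= k)%nat -> U_O m k = 0.
Proof. intros H H'. unfold U_O. decide_comparisons. destruct (Nat.odd k); reflexivity. Qed.

Lemma UE_odd m t : U_E m (2 * t + 1) = 0.
Proof. unfold U_E. parity. reflexivity. Qed.

Lemma UE_even m t : (t <= m)%nat -> U_E m (2 * t) = / INR (m + 1).
Proof. intros H. unfold U_E. parity. decide_comparisons. reflexivity. Qed.

Lemma UE_high m k : (2 * m < k)%nat -> U_E m k = 0.
Proof. intros H. unfold U_E. decide_comparisons. destruct (Nat.even k); reflexivity. Qed.

Lemma UOup_odd m t : U_Oup1 m (2 * t + 1) = 0.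
Proof. unfold U_Oup1. parity. reflexivity. Qed.

Lemma UOup_even m s : (S s < m)%nat -> U_Oup1 m (2 * S s) = / INR (m - 1).
Proof. intros H. unfold U_Oup1. parity. decide_comparisons. reflexivity. Qed.

Lemma UOup_zero m : U_Oup1 m 0 = 0.
Proof. reflexivity. Qed.

Lemma UOup_high m k : (1 <= m)%nat -> (2 * m - 1 <= k)%nat -> U_Oup1 m k = 0.
Proof. intros H H'. unfold U_Oup1. decide_comparisons; destruct (Nat.even k); reflexivity. Qed.

Lemma W_odd m i t : (t < m)%nat -> W m (S i) (2 * t + 1) = if Nat.ltb i t then / INR m else 0.
Proof. intros H. unfold W. parity. decide_comparisons; reflexivity. Qed.

Lemma W_even m i s : (i < m - 1)%nat -> (s < m - 1)%nat ->
  W m (S i) (2 * S s) = if Nat.ltb i s then 0 else if Nat.eqb i s then / (2 * INR m) else / INR m.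
Proof.
  intros H1 H2. unfold W. parity. decide_comparisons; try reflexivity.
  all: rewrite <- Nat.negb_even, even_double; reflexivity.
Qed.

Lemma W_zero m j : W m j 0 = / (2 * INR m).
Proof. reflexivity. Qed.

Lemma W_high m i k : (i < m - 1)%nat -> (2 * m <= k)%nat -> W m (S i) k = 0.
Proof.
  intros H1 H2. unfold W. decide_comparisons; try reflexivity.
  all: destruct (Nat.even k), (Nat.odd k); reflexivity.
Qed.

(** * Decomposition of player 2's strategy *)

Section Decomposition.

Variables (v1 b : R) (m : nat) (q : nat -> R).
Hypotheses (Hv1 : 0 < v1) (Hb : 0 < b) (Hbm : b < INR m).
Hypotheses (Hq0 : forall k, 0 <= q k) (Hq_high : forall k, (2 * m < k)%nat -> q k = 0)
           (Hq_sum : sumR (2 * m + 1) q = 1).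
Hypotheses (Hle : forall k, Apay v1 q k <= v1 * (1 - b / (2 * INR m)) - INR m)
           (Hodd : forall i, (i < m)%nat -> Apay v1 q (2 * i + 1) = v1 * (1 - b / (2 * INR m)) - INR m).

Lemma m_ge1 : (1 <= m)%nat.
Proof. destruct m; [simpl in Hbm; lra | lia]. Qed.

Lemma INR_m_pred : INR (m - 1) = INR m - 1.
Proof. pose proof m_ge1. rewrite minus_INR by lia. reflexivity. Qed.

(* Two consecutive optimal odd bids: the mass they pass over is 4/v1. *)
Lemma odd_chain i : (S i < m)%nat ->
  q (2 * i + 1)%nat + 2 * q (2 * i + 2)%nat + q (2 * i + 3)%nat = 2 * (2 / v1).
Proof.
  intros Hi. pose proof (Hodd i ltac:(lia)) as E0. pose proof (Hodd (S i) Hi) as E1.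
  replace (2 * S i + 1)%nat with (S (S (2 * i + 1))) in E1 by lia.
  rewrite !Apay_succ in E1.
  replace (S (S (2 * i + 1))) with (2 * i + 3)%nat in E1 by lia.
  replace (S (2 * i + 1)) with (2 * i + 2)%nat in E1 by lia.
  apply (Rmult_eq_reg_l (v1 / 2)); [|lra].
  replace (v1 / 2 * (2 * (2 / v1))) with 2 by (field; lra). lra.
Qed.

(* An even bid just above an optimal odd bid is not better. *)
Lemma pair_bound i : (i < m)%nat -> q (2 * i + 1)%nat + q (2 * i + 2)%nat <= 2 / v1.
Proof.
  intros Hi. pose proof (Hodd i Hi) as E0. pose proof (Hle (S (2 * i + 1))) as E1.
  rewrite Apay_succ in E1. replace (S (2 * i + 1)) with (2 * i + 2)%nat in E1 by lia.
  apply (Rmult_le_reg_l (v1 / 2)); [lra|].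
  replace (v1 / 2 * (2 / v1)) with 1 by (field; lra). lra.
Qed.

(* Bid 1 is optimal. *)
Lemma first_bid : q 0%nat + q 1%nat / 2 = 1 - b / (2 * INR m) - (INR m - 1) / v1.
Proof.
  pose proof (Hodd 0 ltac:(pose proof m_ge1; lia)) as E. unfold Apay in E. simpl in E.
  replace (INR 1) with 1 in E by reflexivity.
  apply (Rmult_eq_reg_l v1); [|lra].
  replace (v1 * (1 - b / (2 * INR m) - (INR m - 1) / v1))
    with (v1 * (1 - b / (2 * INR m)) - (INR m - 1)) by (field; lra).
  lra.
Qed.

(* Bid 2m-1 is optimal; it wins everything except q(2m-1) and q(2m). *)
Lemma last_bid : q (2 * m)%nat + q (2 * m - 1)%nat / 2 = b / (2 * INR m) - (INR m - 1) / v1.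
Proof.
  pose proof m_ge1 as Hm.
  pose proof (Hodd (m - 1) ltac:(lia)) as E. unfold Apay in E.
  replace (2 * (m - 1) + 1)%nat with (2 * m - 1)%nat in E by lia.
  replace (2 * m + 1)%nat with (S (S (2 * m - 1))) in Hq_sum by lia. cbn [sumR] in Hq_sum.
  replace (S (2 * m - 1)) with (2 * m)%nat in Hq_sum by lia.
  replace (sumR (2 * m - 1) q) with (1 - q (2 * m - 1)%nat - q (2 * m)%nat) in E by lra.
  replace (INR (2 * m - 1)) with (2 * INR m - 1) in E by (rewrite minus_INR, mult_INR by lia; simpl; ring).
  apply (Rmult_eq_reg_l v1); [|lra].
  replace (v1 * (b / (2 * INR m) - (INR m - 1) / v1))
    with (v1 * (b / (2 * INR m)) - (INR m - 1)) by (field; lra).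
  lra.
Qed.

(* Bid 0 is not better than U. *)
Lemma zero_bid : q 0%nat <= 2 - b / INR m - 2 * INR m / v1.
Proof.
  pose proof (Hle 0) as E. unfold Apay in E. simpl in E.
  apply (Rmult_le_reg_l (v1 / 2)); [lra|].
  replace (v1 / 2 * (2 - b / INR m - 2 * INR m / v1))
    with (v1 * (1 - b / (2 * INR m)) - INR m) by (field; lra).
  lra.
Qed.

(* Together, bids 0 and 1 bound q 1 from below. *)
Lemma q1_lower : b / (2 * INR m) - 1 + (INR m + 1) / v1 <= q 1%nat / 2.
Proof.
  pose proof first_bid. pose proof zero_bid.
  replace (b / INR m) with (2 * (b / (2 * INR m))) in * by (field; lra).
  replace (2 * INR m / v1) with ((INR m - 1) / v1 + (INR m + 1) / v1) in * by (field; lra).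
  lra.
Qed.

Let r := INR m / b.
Let lO := r * INR m * q 1%nat.
Let lE := r * (INR m + 1) * q (2 * m)%nat.
Let lOup := r * (INR m - 1) * (2 / v1 - q (2 * m - 1)%nat - q (2 * m)%nat).
Let lam (j : nat) : R :=
  match j with O => 0 | S i => 2 * INR m * r * (2 / v1 - q (2 * i + 1)%nat - q (2 * i + 2)%nat) end.
Let Lam := sumR (m - 1) (fun i => lam (S i)).

Lemma r_pos : 0 < r.
Proof. unfold r. apply Rdiv_lt_0_compat; lra. Qed.

(* By the odd-bid chain the weights lam telescope. *)
Lemma lam_partial_sum t : (t <= m - 1)%nat ->
  sumR t (fun i => lam (S i)) = INR m * r * (q (2 * t + 1)%nat - q 1%nat).
Proof.
  intros Ht.
  rewrite (sumR_ext _ (fun i => INR m * r * (q (2 * S i + 1)%nat - q (2 * i + 1)%nat))).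
  - rewrite sumR_scal, (sumR_telescope (fun i => q (2 * i + 1)%nat)). reflexivity.
  - intros i Hi. unfold lam; cbv beta iota. pose proof (odd_chain i ltac:(lia)) as C.
    replace (2 * S i + 1)%nat with (2 * i + 3)%nat by lia.
    replace (2 / v1) with ((q (2 * i + 1)%nat + 2 * q (2 * i + 2)%nat + q (2 * i + 3)%nat) / 2)
      by lra.
    lra.
Qed.

Lemma Lam_value : Lam = INR m * r * (q (2 * m - 1)%nat - q 1%nat).
Proof.
  unfold Lam. rewrite lam_partial_sum by lia.
  replace (2 * (m - 1) + 1)%nat with (2 * m - 1)%nat by (pose proof m_ge1; lia). reflexivity.
Qed.

Lemma weights_nonneg :
  0 <= lO /\ 0 <= lE /\ 0 <= lOup /\ (forall j, (1 <= j <= m - 1)%nat -> 0 <= lam j).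
Proof.
  pose proof r_pos. pose proof m_ge1 as Hm. pose proof (le_INR 1 m Hm) as HM. simpl in HM.
  pose proof (Hq0 1). pose proof (Hq0 (2 * m)).
  assert (Htop : q (2 * m - 1)%nat + q (2 * m)%nat <= 2 / v1).
  { pose proof (pair_bound (m - 1) ltac:(lia)) as B.
    replace (2 * (m - 1) + 1)%nat with (2 * m - 1)%nat in B by lia.
    replace (2 * (m - 1) + 2)%nat with (2 * m)%nat in B by lia. exact B. }
  unfold lO, lE, lOup. split; [|split; [|split]].
  - apply Rmult_le_pos; [|lra]. apply Rmult_le_pos; lra.
  - apply Rmult_le_pos; [|lra]. apply Rmult_le_pos; lra.
  - apply Rmult_le_pos; [|lra]. apply Rmult_le_pos; lra.
  - intros [|i] Hj; [lia|]. unfold lam; cbv beta iota. pose proof (pair_bound i ltac:(lia)).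
    apply Rmult_le_pos; [|lra]. apply Rmult_le_pos; lra.
Qed.

Lemma weights_total : lO + lE + lOup + Lam = 1.
Proof.
  pose proof last_bid. rewrite Lam_value. unfold lO, lE, lOup, r.
  apply (Rmult_eq_reg_l (b / INR m)); [|apply Rgt_not_eq, Rdiv_lt_0_compat; lra].
  transitivity (q (2 * m - 1)%nat + 2 * q (2 * m)%nat + (INR m - 1) * (2 / v1)); [field; lra|].
  replace ((INR m - 1) * (2 / v1)) with (2 * ((INR m - 1) / v1)) by (field; lra).
  replace (b / INR m * 1) with (2 * (b / (2 * INR m))) by (field; lra).
  lra.
Qed.

Lemma weights_mean : (2 <= m)%nat ->
  lO / INR m + lE / (INR m + 1) + lOup / (INR m - 1) + / INR m * Lam = 2 * INR m / (b * v1).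
Proof.
  intros Hm. pose proof (le_INR 2 m Hm) as HM. simpl in HM.
  rewrite Lam_value. unfold lO, lE, lOup, r. field. repeat split; lra.
Qed.

(* Uses that v2 <= 2m, which player 2's equilibrium condition guarantees. *)
Lemma weights_even_bound v2 : v2 <= 2 * INR m ->
  lE / (INR m + 1) + / (2 * INR m) * Lam <= INR m / b * (1 - v2 / v1).
Proof.
  intros Hv2. pose proof r_pos. pose proof last_bid. pose proof q1_lower.
  assert (v2 / v1 <= 2 * INR m / v1)
    by (unfold Rdiv; apply Rmult_le_compat_r; [left; apply Rinv_0_lt_compat|]; lra).
  replace (2 * INR m / v1) with ((INR m - 1) / v1 + (INR m + 1) / v1) in * by (field; lra).
  rewrite Lam_value. fold r. unfold lE.
  replace (r * (INR m + 1) * q (2 * m)%nat / (INR m + 1)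
           + / (2 * INR m) * (INR m * r * (q (2 * m - 1)%nat - q 1%nat)))
    with (r * (q (2 * m)%nat + q (2 * m - 1)%nat / 2 - q 1%nat / 2)) by (field; lra).
  apply Rmult_le_compat_l; lra.
Qed.

Lemma weights_top_bound : (2 <= m)%nat ->
  / (2 * INR m) * Lam + lOup / (INR m - 1) <= (INR m - b) / b.
Proof.
  intros Hm. pose proof (le_INR 2 m Hm) as HM. simpl in HM.
  pose proof r_pos. pose proof last_bid. pose proof q1_lower.
  rewrite Lam_value. unfold lOup.
  replace (/ (2 * INR m) * (INR m * r * (q (2 * m - 1)%nat - q 1%nat))
           + r * (INR m - 1) * (2 / v1 - q (2 * m - 1)%nat - q (2 * m)%nat) / (INR m - 1))
    with (r * (2 / v1 - q 1%nat / 2 - (q (2 * m)%nat + q (2 * m - 1)%nat / 2))) by (field; lra).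
  replace ((INR m - b) / b) with (r * (1 - 2 * (b / (2 * INR m)))) by (unfold r; field; lra).
  apply Rmult_le_compat_l; [lra|].
  replace (2 / v1) with ((INR m + 1) / v1 - (INR m - 1) / v1) by (field; lra). lra.
Qed.

Let Z (k : nat) : R :=
  lO * U_O m k + lE * U_E m k + lOup * U_Oup1 m k
  + sumR (m - 1) (fun i => lam (S i) * W m (S i) k).

Lemma Z_odd t : (t < m)%nat -> Z (2 * t + 1)%nat = r * q (2 * t + 1)%nat.
Proof.
  intros Ht. unfold Z. rewrite UO_odd, UE_odd, UOup_odd by auto.
  rewrite (sumR_ext _ (fun i => lam (S i) * (if Nat.ltb i t then / INR m else 0)))
    by (intros i Hi; rewrite W_odd by auto; reflexivity).
  rewrite sumR_cut, lam_partial_sum by lia. unfold lO. field. lra.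
Qed.

Lemma Z_even s : (S s < m)%nat -> Z (2 * S s)%nat = r * q (2 * S s)%nat.
Proof.
  intros Hs. pose proof (le_INR 2 m ltac:(lia)) as HM. simpl in HM.
  unfold Z. rewrite UO_even, UE_even, UOup_even by lia. rewrite plus_INR, INR_m_pred.
  rewrite (sumR_ext _ (fun i => lam (S i) *
             (if Nat.ltb i s then 0 else if Nat.eqb i s then / (2 * INR m) else / INR m)))
    by (intros i Hi; rewrite W_even by lia; reflexivity).
  rewrite sumR_mid by lia. fold Lam. rewrite Lam_value, lam_partial_sum by lia.
  pose proof (odd_chain s Hs) as C.
  replace (2 * S s)%nat with (2 * s + 2)%nat by lia.
  replace (2 * s + 2 + 1)%nat with (2 * s + 3)%nat by lia.
  unfold lam, lO, lE, lOup; cbv beta iota.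
  replace (2 / v1) with ((q (2 * s + 1)%nat + 2 * q (2 * s + 2)%nat + q (2 * s + 3)%nat) / 2)
    by lra.
  simpl INR. field. lra.
Qed.

Lemma Z_top : Z (2 * m)%nat = r * q (2 * m)%nat.
Proof.
  pose proof m_ge1. unfold Z.
  rewrite UO_high, UE_even, UOup_high by lia. rewrite plus_INR.
  rewrite (sumR_zero _ (m - 1)) by (intros i Hi; rewrite W_high by lia; ring).
  unfold lE. simpl INR. field. lra.
Qed.

Lemma Z_zero : Z 0%nat = r * (q 0%nat - 1 + b / INR m).
Proof.
  pose proof first_bid. pose proof last_bid.
  unfold Z. rewrite UOup_zero.
  replace (U_O m 0) with 0 by reflexivity.
  replace (U_E m 0) with (/ (INR m + 1)) by (change (U_E m 0) with (/ INR (m + 1)); rewrite plus_INR; reflexivity).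
  rewrite (sumR_ext _ (fun i => / (2 * INR m) * lam (S i))) by (intros; rewrite W_zero; ring).
  rewrite sumR_scal. fold Lam. rewrite Lam_value.
  replace (q 0%nat - 1 + b / INR m) with (q (2 * m)%nat + q (2 * m - 1)%nat / 2 - q 1%nat / 2)
    by (replace (b / INR m) with (2 * (b / (2 * INR m))) by (field; lra); lra).
  unfold lE. simpl INR. field. lra.
Qed.

Lemma Z_high k : (2 * m < k)%nat -> Z k = 0.
Proof.
  intros Hk. pose proof m_ge1. unfold Z.
  rewrite UO_high, UE_high, UOup_high by lia.
  rewrite (sumR_zero _ (m - 1)) by (intros i Hi; rewrite W_high by lia; ring). ring.
Qed.

Lemma representation k : q k = (1 - b / INR m) * delta 0 k + b / INR m * Z k.
Proof.
  assert (Hbr : b / INR m * r = 1) by (unfold r; field; lra).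
  destruct (Nat.lt_ge_cases (2 * m) k) as [Hk|Hk].
  { rewrite Hq_high, delta_ne, Z_high by lia. ring. }
  destruct (Nat.Even_or_Odd k) as [[t ->] | [t ->]].
  - destruct t as [|s].
    + change (2 * 0)%nat with 0%nat. rewrite delta_eq, Z_zero.
      transitivity (1 - b / INR m + b / INR m * r * (q 0%nat - 1 + b / INR m)); [rewrite Hbr|]; ring.
    + rewrite delta_ne by lia. destruct (Nat.eq_dec (S s) m) as [Hsm | Hs].
      * rewrite Hsm, Z_top. rewrite <- Rmult_assoc, Hbr. ring.
      * rewrite Z_even by lia. rewrite <- Rmult_assoc, Hbr. ring.
  - rewrite delta_ne, Z_odd by lia. rewrite <- Rmult_assoc, Hbr. ring.
Qed.

Lemma decomposition_many v2 : v2 <= 2 * INR m -> (2 <= m)%nat ->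
  exists (lO lE lOup : R) (lam : nat -> R),
    0 <= lO /\ 0 <= lE /\ 0 <= lOup /\
    (forall j, (1 <= j <= m - 1)%nat -> 0 <= lam j) /\
    lO + lE + lOup + sumR (m - 1) (fun i => lam (S i)) = 1 /\
    lE / INR (m + 1) + / (2 * INR m) * sumR (m - 1) (fun i => lam (S i))
      <= INR m / b * (1 - v2 / v1) /\
    lO / INR m + lE / INR (m + 1) + lOup / INR (m - 1)
      + / INR m * sumR (m - 1) (fun i => lam (S i)) = 2 * INR m / (b * v1) /\
    (b > INR m - 1 ->
      / (2 * INR m) * sumR (m - 1) (fun i => lam (S i)) + lOup / INR (m - 1)
        <= (INR m - b) / b) /\
    (forall k, q k = (1 - b / INR m) * delta 0 k
        + b / INR m * (lO * U_O m k + lE * U_E m k + lOup * U_Oup1 m k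
                       + sumR (m - 1) (fun i => lam (S i) * W m (S i) k))).
Proof.
  intros Hv2 Hm. exists lO, lE, lOup, lam.
  rewrite plus_INR, INR_m_pred. simpl (INR 1). fold Lam.
  destruct weights_nonneg as [HO [HE [HOup Hlam]]].
  repeat split; auto.
  - apply weights_total.
  - apply (weights_even_bound v2 Hv2).
  - apply (weights_mean Hm).
  - intros _. apply (weights_top_bound Hm).
  - apply representation.
Qed.

(* For m = 1 the weights lOup and lam vanish or are absent. *)
Lemma decomposition_one : m = 1%nat ->
  exists lO lE : R,
    0 <= lO /\ 0 <= lE /\ lO + lE = 1 /\
    lE / 2 >= 1 - 2 / (b * v1) /\
    lE / 2 <= 1 / b - 2 / (b * v1) /\
    (forall k, q k = (1 - b / INR m) * delta 0 k
                      + b / INR m * (lO * U_O 1 k + lE * U_E 1 k)).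
Proof.
  intros Hm1. exists lO, lE.
  destruct weights_nonneg as [HO [HE _]].
  assert (HlOup : lOup = 0) by (unfold lOup; rewrite Hm1; simpl; ring).
  assert (HLam : Lam = 0) by (unfold Lam; rewrite Hm1; reflexivity).
  assert (HlE : lE / 2 = q 2%nat / b) by (unfold lE, r; rewrite Hm1; simpl; field; lra).
  pose proof weights_total as Htot.
  pose proof first_bid as Hfirst. pose proof last_bid as Hlast. pose proof zero_bid as Hzero.
  pose proof (pair_bound 0 ltac:(lia)) as Hpair.
  rewrite Hm1 in Hfirst, Hlast, Hzero. simpl in Hfirst, Hlast, Hzero, Hpair.
  replace (1 - 1) with 0 in Hfirst, Hlast by ring.
  replace (0 / v1) with 0 in Hfirst, Hlast by (field; lra).
  split; [|split; [|split; [|split; [|split]]]]; auto.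
  - lra.
  - rewrite HlE. apply Rle_ge.
    replace (1 - 2 / (b * v1)) with ((b - 2 / v1) / b) by (field; lra).
    apply Rmult_le_compat_r; [left; apply Rinv_0_lt_compat|]; lra.
  - rewrite HlE.
    replace (1 / b - 2 / (b * v1)) with ((1 - 2 / v1) / b) by (field; lra).
    apply Rmult_le_compat_r; [left; apply Rinv_0_lt_compat|]; lra.
  - intros k. rewrite representation. unfold Z. rewrite HlOup, Hm1. simpl sumR. ring.
Qed.

End Decomposition.

Theorem lemma2 (v1 v2 : R) (m : nat) (b : R) (p q : nat -> R) :
  v1 >= v2 -> v2 > 0 -> (1 <= m)%nat -> 0 < b -> b < INR m ->
  nash v1 v2 p q -> mean p = INR m -> mean q = b ->
  ((m = 1%nat) ->
    exists lO lE : R,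
      0 <= lO /\ 0 <= lE /\ lO + lE = 1 /\
      lE / 2 >= 1 - 2 / (b * v1) /\
      lE / 2 <= 1 / b - 2 / (b * v1) /\
      (forall k, q k = (1 - b / INR m) * delta 0 k
                        + b / INR m * (lO * U_O 1 k + lE * U_E 1 k))) /\
  ((2 <= m)%nat ->
    exists (lO lE lOup : R) (lam : nat -> R),
      0 <= lO /\ 0 <= lE /\ 0 <= lOup /\
      (forall j, (1 <= j <= m - 1)%nat -> 0 <= lam j) /\
      lO + lE + lOup + sumR (m - 1) (fun i => lam (S i)) = 1 /\
      lE / INR (m + 1) + / (2 * INR m) * sumR (m - 1) (fun i => lam (S i))
        <= INR m / b * (1 - v2 / v1) /\
      lO / INR m + lE / INR (m + 1) + lOup / INR (m - 1)
        + / INR m * sumR (m - 1) (fun i => lam (S i)) = 2 * INR m / (b * v1) /\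
      (b > INR m - 1 ->
        / (2 * INR m) * sumR (m - 1) (fun i => lam (S i)) + lOup / INR (m - 1)
          <= (INR m - b) / b) /\
      (forall k, q k = (1 - b / INR m) * delta 0 k
          + b / INR m * (lO * U_O m k + lE * U_E m k + lOup * U_Oup1 m k
                         + sumR (m - 1) (fun i => lam (S i) * W m (S i) k)))).
Proof.
  intros Hv Hv2 _ Hb Hbm Hnash Hp_mean Hq_mean.
  destruct (equilibrium_structure v1 v2 m b p q Hv Hv2 Hb Hbm Hnash Hp_mean Hq_mean)
    as [Hq0 [Hq_high [Hq_sum [Hle [Hodd Hv2m]]]]].
  assert (Hv1 : 0 < v1) by lra.
  split.
  - exact (decomposition_one v1 b m q Hv1 Hb Hbm Hq0 Hq_high Hq_sum Hle Hodd).
  - exact (decomposition_many v1 b m q Hv1 Hb Hbm Hq0 Hq_high Hq_sum Hle Hodd v2 Hv2m).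
Qed.
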